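(* Let $l=2^s$ with $s$ an integer and $l>2$, and let $q=l^2$. Then there exists a quantum MDS code with parameters $[[l^2+1,\,l^2-2l+3,\,l]]_q$; in particular, there exists a $q$-ary quantum MDS code of length $l^2+1$ and minimum distance $l$.
   Context: Quantum codes: let $V_n=(\mathbb{C}^q)^{\otimes n}$ with orthonormal basis $\{|\mathbf{c}\rangle:\mathbf{c}\in\mathbb{F}_q^n\}$, $q=p^e$. For $a,b\in\mathbb{F}_q$ define $X(a)|x\rangle=|x+a\rangle$, $Z(b)|x\rangle=\omega^{\mathrm{tr}(bx)}|x\rangle$ with $\omega=e^{2\pi i/p}$ and $\mathrm{tr}:\mathbb{F}_q\to\mathbb{F}_p$ the trace; for $\mathbf{a},\mathbf{b}\in\mathbb{F}_q^n$ let $X(\mathbf{a})=\bigotimes_i X(a_i)$, $Z(\mathbf{b})=\bigotimes_i Z(b_i)$. The error group is $G_n=\{\omega^cX(\mathbf{a})Z(\mathbf{b})\}$, and the weight of $\omega^cX(\mathbf{a})Z(\mathbf{b})$ is the number of $i$ with $(a_i,b_i)\ne(0,0)$. A quantum code with parameters $[[n,k,d]]_q$ is a subspace $Q\subseteq V_n$ of dimension $q^k$ with minimum distance $d$: for all $|u\rangle,|v\rangle\in Q$ with $\langle u|v\rangle=0$ and every $E\in G_n$ of weight at most $d-1$, $\langle u|E|v\rangle=0$ (with the standard purity-based convention when $k=0$). Every $[[n,k,d]]_q$ quantum code satisfies the quantum Singleton bound $2d\le n-k+2$; a code attaining $2d=n-k+2$ is called a quantum MDS code. *)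

From HB Require Import structures.
From mathcomp Require Import all_boot all_order all_algebra all_field.
Set Implicit Arguments. Unset Strict Implicit. Unset Printing Implicit Defensive.
Import Order.TTheory GRing.Theory Num.Theory.
Local Open Scope ring_scope.

Section QuantumCodes.
Variable F : finFieldType.

(* q = #|F| = p^e, p the characteristic *)
Definition qchar : nat := pdiv #|F|.
Definition qdeg : nat := logn qchar #|F|.

(* absolute trace F_q -> F_p (value lies in the prime subfield of F) *)
Definition ftrace (x : F) : F := \sum_(i < qdeg) x ^+ (qchar ^ i).

Definition ftrace_nat (x : F) : nat :=
  odflt 0%N (omap (@nat_of_ord _) [pick k : 'I_qchar | ftrace x == (k : nat)%:R]).

(* omega = exp(2 pi i / p) = (exp(i pi / p))^2 *)
Definition qomega : algC := (qchar.-root (-1)) ^+ 2.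

(* V_n = (C^q)^{(x) n}: functions on the basis { |c> : c in F^n } *)
Definition qstate (n : nat) := {ffun {ffun 'I_n -> F} -> algC^o}.

Definition qinner n (u v : qstate n) : algC :=
  \sum_(y : {ffun 'I_n -> F}) (u y)^* * v y.

(* action of omega^c X(a) Z(b), where X(a)Z(b)|x> = omega^{tr(b.x)} |x+a>
   (Z(b) = tensor of Z(b_i)). *)
Definition qerr n (c : nat) (a b : {ffun 'I_n -> F}) (v : qstate n) : qstate n :=
  [ffun y : {ffun 'I_n -> F} =>
     qomega ^+ c *
     (\prod_(i < n) qomega ^+ (ftrace_nat (b i * (y i - a i)))) *
     v [ffun i => y i - a i]].

Definition qweight n (a b : {ffun 'I_n -> F}) : nat :=
  #|[set i : 'I_n | (a i != 0) || (b i != 0)]|.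

(* minimum distance d (k > 0 convention) *)
Definition qmin_dist n (Q : {vspace qstate n}) (d : nat) : Prop :=
  forall u v : qstate n, u \in Q -> v \in Q -> qinner u v = 0 ->
  forall (c : nat) (a b : {ffun 'I_n -> F}), (qweight a b <= d.-1)%N ->
  qinner u (qerr c a b v) = 0.

Definition is_qcode n (Q : {vspace qstate n}) (k d : nat) : Prop :=
  \dim Q = (#|F| ^ k)%N /\ qmin_dist Q d.

Definition is_qMDS n (Q : {vspace qstate n}) (k d : nat) : Prop :=
  is_qcode Q k d /\ (2 * d = n - k + 2)%N.

End QuantumCodes.

(* The extended generalized Reed-Solomon code of length q + 1 and dimension m
   whose column multipliers satisfy w(a)^2 = R(a), for a monic R of degree
   q + 1 - 2m without roots in F, is Euclidean self-orthogonal, and its dual is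
   MDS, so every nonzero dual word has weight > m. Superposing the cosets of
   this code C inside its dual (the CSS construction) gives a
   [[q + 1, q + 1 - 2m, m + 1]] code. For q = l^2 with l a power of 2 and
   m = l - 1, R = (X^(l+1) + c)(X^2 + X + c)^e with tr(c) = 1 has the right
   degree and no roots, and square roots exist since squaring is bijective. *)

From HB Require Import structures.
From mathcomp Require Import all_boot all_order all_algebra all_field.
From mathcomp Require Import fingroup cyclic mxabelem.
From mathcomp Require Import zify ring.

Set Implicit Arguments. Unset Strict Implicit. Unset Printing Implicit Defensive.
Import Order.TTheory GRing.Theory Num.Theory.
Local Open Scope ring_scope.

Section PowerSums.
Variable F : finFieldType.
Local Notation q := #|F|.

Lemma natr_card : q%:R = 0 :> F.
Proof. by rewrite -FinRing.zmodXgE -cardsT expg_cardG ?inE. Qed.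

Lemma expf_card_pred (a : F) : a != 0 -> a ^+ q.-1 = 1.
Proof.
move=> a_nz; apply: (mulfI a_nz).
by rewrite -exprS prednK ?expf_card ?mulr1 // ltnW ?finNzRing_gt1.
Qed.

Lemma exists_expr_neq1 i : (0 < i < q.-1)%N -> exists2 a : F, a != 0 & a ^+ i != 1.
Proof.
case/andP=> i_gt0 lt_i_q.
have [/existsP[a /andP[a_nz ai_neq1]] | ] := boolP [exists a : F, (a != 0) && (a ^+ i != 1)].
  by exists a.
rewrite negb_exists => /forallP all_roots; exfalso.
have: ('X^i - 1%:P : {poly F}) = 0.
  apply: (roots_geq_poly_eq0 (rs := enum (predC1 0))); last 2 first.
  - exact: enum_uniq.
  - by rewrite size_XnsubC // -cardE cardC1.
  apply/allP => a; rewrite mem_enum inE => a_nz.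
  by have := all_roots a; rewrite a_nz rootE !hornerE subr_eq0 negbK.
by move=> eq0; have := size_XnsubC (1 : F) i_gt0; rewrite eq0 size_poly0.
Qed.

Lemma sum_exprF i : (i < q)%N -> \sum_(a : F) a ^+ i = - (i == q.-1)%:R.
Proof.
move=> lt_i_q; have q_gt1 := finNzRing_gt1 F.
have [->|i_nz] := eqVneq i 0%N.
  under eq_bigr do rewrite expr0.
  have -> : (0 == q.-1)%N = false by move: q_gt1; case: #|F| => [|[|]].
  by rewrite sumr_const -[_ *+ _]/(_%:R) cardT -cardE natr_card oppr0.
have [->|i_neq] := eqVneq i q.-1.
  rewrite (bigD1 0) //= expr0n (_ : q.-1 == 0%N = false); last by lia.
  under eq_bigr => a a_nz do rewrite expf_card_pred //.
  rewrite sumr_const cardC1 add0r -[_ *+ _]/(_%:R).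
  apply/eqP; rewrite -addr_eq0 -[X in _ + X]/(1%:R) -natrD addn1 prednK ?natr_card //.
  exact: ltnW.
have [a a_nz ai_neq1] : exists2 a : F, a != 0 & a ^+ i != 1.
  by apply: exists_expr_neq1; lia.
rewrite oppr0; set S := \sum_b _.
have : S = a ^+ i * S.
  rewrite {1}/S (reindex_inj (mulfI a_nz)) mulr_sumr.
  by apply: eq_bigr => b _; rewrite exprMn.
move/eqP; rewrite -subr_eq0 -{1}(mul1r S) -mulrBl mulf_eq0 subr_eq0 eq_sym.
by rewrite (negbTE ai_neq1) => /eqP.
Qed.

Lemma sum_hornerF (p : {poly F}) : (size p <= q)%N -> \sum_(a : F) p.[a] = - p`_q.-1.
Proof.
move=> le_p_q; under eq_bigr do rewrite (horner_coef_wide _ le_p_q).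
rewrite exchange_big /=.
under eq_bigr => i _ do rewrite -mulr_sumr sum_exprF //.
have lt_q1_q : (q.-1 < q)%N by rewrite ltn_predL ltnW ?finNzRing_gt1.
rewrite (bigD1 (Ordinal lt_q1_q)) //= eqxx mulrN1 big1 ?addr0 // => i i_neq.
have /negbTE -> : (i : nat) != q.-1 by apply: contra_neq i_neq => eq_i; apply: val_inj.
by rewrite oppr0 mulr0.
Qed.

End PowerSums.

Section ExtendedGRS.
Variables (F : finFieldType) (q m : nat) (R : {poly F}) (w : F -> F).
Hypotheses (card_F : #|F| = q) (m_gt0 : (0 < m)%N) (le_m_q : (m <= q)%N).
Hypotheses (R_monic : R \is monic) (size_R : (size R + 2 * m = q + 2)%N).
Hypotheses (w_sqr : forall a, w a ^+ 2 = R.[a]) (R_nz : forall a, R.[a] != 0).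

Lemma w_nz a : w a != 0.
Proof. by have := R_nz a; rewrite -w_sqr expf_eq0. Qed.

Definition elt (i : nat) : F := nth 0 (enum F) i.

Lemma size_enumF : size (enum F) = q.
Proof. by rewrite -cardE. Qed.

Lemma sum_elt (f : F -> F) : \sum_(i < q) f (elt i) = \sum_a f a.
Proof.
by rewrite -size_enumF -(big_mkord xpredT (f \o elt)) -(big_nth 0 xpredT f) enumT.
Qed.

Lemma elt_inj i j : (i < q)%N -> (j < q)%N -> elt i = elt j -> i = j.
Proof.
rewrite -size_enumF => lt_i lt_j /eqP.
by rewrite nth_uniq ?enum_uniq // => /eqP.
Qed.

Lemma elt_surj a : exists2 i, (i < q)%N & elt i = a.
Proof.
exists (index a (enum F)); first by rewrite -size_enumF index_mem mem_enum.
by rewrite /elt nth_index ?mem_enum.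
Qed.

(* Columns 0, ..., q-1 are the field elements elt i, column q is the point at infinity. *)
Definition grs_gen : 'M[F]_(m, q.+1) :=
  \matrix_(j < m, i < q.+1)
    if (i < q)%N then w (elt i) * elt i ^+ j else (j == m.-1 :> nat)%:R.

Lemma coef_RXn d : (d <= 2 * m - 2)%N -> (R * 'X^d)`_q.-1 = (d == 2 * m - 2)%N%:R.
Proof.
move=> le_d; have R_gt0 : (0 < size R)%N by rewrite size_poly_gt0 monic_neq0.
have sR : size R = (q + 2 - 2 * m)%N by lia.
rewrite coefMXn ifN -?leqNgt; last by lia.
have [-> | d_neq] := eqVneq d (2 * m - 2)%N.
  by rewrite (_ : (q.-1 - _)%N = (size R).-1) -?lead_coefE ?(monicP R_monic) //; lia.
by rewrite nth_default // sR; lia.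
Qed.

(* The rows are orthogonal because sum_a R(a) a^(j+k) is minus the
   coefficient of X^(q-1) in R X^(j+k), which is 1 exactly when j = k = m-1;
   the point at infinity cancels it. *)
Lemma grs_gen_selforth : grs_gen *m grs_gen^T = 0.
Proof.
apply/matrixP => j k; rewrite !mxE big_ord_recr /= !mxE ltnn.
rewrite (eq_bigr (fun i : 'I_q => (R * 'X^(j + k)).[elt i])) => [|i _]; last first.
  by rewrite !mxE /= ltn_ord hornerM hornerXn -w_sqr exprD; ring.
have [lt_j lt_k] := (ltn_ord j, ltn_ord k).
have le_jk : (j + k <= 2 * m - 2)%N by lia.
rewrite (sum_elt (fun a => (R * 'X^(j + k)).[a])) sum_hornerF card_F; last first.
  have R_gt0 : (0 < size R)%N by rewrite size_poly_gt0 monic_neq0.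
  by rewrite size_mulXn ?monic_neq0 //; lia.
rewrite coef_RXn //.
have -> : (j + k == 2 * m - 2)%N = (j == m.-1 :> nat) && (k == m.-1 :> nat).
  by apply/eqP/andP => [jk | [/eqP jm /eqP km]]; [split; apply/eqP | ]; lia.
by case: (j == m.-1 :> nat); case: (k == m.-1 :> nat);
  rewrite /= ?mulr0 ?mulr1 ?oppr0 ?addNr ?addr0.
Qed.

Definition grs_word (p : {poly F}) : 'rV[F]_q.+1 := (\row_(j < m) p`_j) *m grs_gen.

Lemma grs_wordE (p : {poly F}) (i : 'I_q.+1) : (size p <= m)%N ->
  grs_word p ord0 i = if (i < q)%N then w (elt i) * p.[elt i] else p`_m.-1.
Proof.
move=> le_p_m; rewrite !mxE; case: ifP => lt_i.
  rewrite (horner_coef_wide _ le_p_m) mulr_sumr; apply: eq_bigr => j _.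
  by rewrite !mxE lt_i mulrCA.
have lt_m1_m : (m.-1 < m)%N by rewrite ltn_predL.
rewrite (bigD1 (Ordinal lt_m1_m)) //= big1 ?addr0 => [|j jm]; first by rewrite !mxE lt_i eqxx mulr1.
by rewrite !mxE lt_i (negbTE (jm : (j : nat) != m.-1)) mulr0.
Qed.

Lemma grs_gen_free : row_free grs_gen.
Proof.
apply: inj_row_free => v v0; pose p : {poly F} := rVpoly v.
have vE : v = \row_(j < m) p`_j by apply/rowP => j; rewrite !mxE coef_rVpoly_ord.
suff p0 : p = 0 by rewrite vE; apply/rowP => j; rewrite !mxE p0 coef0.
have le_p_m : (size p <= m)%N by apply: size_poly.
apply: (roots_geq_poly_eq0 (rs := enum F)); last 2 first.
- exact: enum_uniq.
- by rewrite size_enumF (leq_trans le_p_m).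
apply/allP => a _; have [i lt_i <-] := elt_surj a.
have := congr1 (fun x : 'rV_q.+1 => x ord0 (Ordinal (leqW lt_i))) v0.
rewrite /= {1}vE -/(grs_word p) grs_wordE // lt_i mxE => /eqP.
by rewrite mulf_eq0 (negbTE (w_nz _)).
Qed.

(* Any m columns are independent: a polynomial of degree < m can vanish at all
   but one of them, the point at infinity being handled by the top coefficient. *)
Lemma exists_grs_word_sep (S : {set 'I_q.+1}) i0 : i0 \in S -> (#|S| <= m)%N ->
  exists2 p : {poly F}, (size p <= m)%N &
    grs_word p ord0 i0 != 0 /\ {in S :\ i0, forall i, grs_word p ord0 i = 0}.
Proof.
move=> i0S le_S_m.
pose rs := [seq elt i | i : 'I_q.+1 <- enum (S :\ i0) & (i < q)%N].
pose p0 : {poly F} := \prod_(a <- rs) ('X - a%:P).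
have p0_monic : p0 \is monic by apply: monic_prod_XsubC.
have size_p0 : size p0 = (size rs).+1 by rewrite size_prod_XsubC.
have le_rs : (size rs <= #|S :\ i0|)%N by rewrite size_map size_filter cardE count_size.
have card_S : #|S| = #|S :\ i0|.+1 by rewrite (cardsD1 i0 S) i0S.
have p0_root i : i \in S :\ i0 -> (i < q)%N -> p0.[elt i] = 0.
  move=> iS lt_i; apply/eqP; rewrite -rootE root_prod_XsubC.
  by apply/mapP; exists i; rewrite // mem_filter lt_i mem_enum.
have [lt_i0 | ge_i0] := boolP (i0 < q)%N.
  exists p0; first by lia.
  rewrite grs_wordE ?lt_i0; last by lia.
  split=> [|i iS].
    rewrite mulf_neq0 ?w_nz // -rootE root_prod_XsubC; apply/mapP => [[i]].
    rewrite mem_filter mem_enum !inE => /andP[lt_i /andP[ii0 _]] /(elt_inj lt_i0 lt_i) i0i.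
    by case/eqP: ii0; apply: val_inj.
  rewrite grs_wordE; last by lia.
  case: ifP => lt_i; first by rewrite p0_root ?mulr0.
  have : (size rs < #|S :\ i0|)%N.
    rewrite size_map size_filter cardE -(count_predC (fun i : 'I_q.+1 => (i < q)%N)).
    by rewrite -addn1 leq_add2l -has_count; apply/hasP; exists i; rewrite ?mem_enum //= lt_i.
  by move=> lt_rs; apply: nth_default; rewrite size_p0; lia.
have lt_i i : i \in S :\ i0 -> (i < q)%N.
  case/setD1P => ii0 _; rewrite ltn_neqAle -ltnS ltn_ord andbT.
  by apply: contra ii0 => /eqP i_q; apply/eqP/val_inj; rewrite /= i_q; have := ltn_ord i0; lia.
pose p := p0 * 'X^(m - size p0).
have size_p : size p = m by rewrite size_mulXn ?monic_neq0 //; lia.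
exists p; first by rewrite size_p.
rewrite grs_wordE ?size_p // (negbTE ge_i0); split=> [|i iS].
  have -> : m.-1 = (size p).-1 by rewrite size_p.
  by rewrite -lead_coefE lead_coef_Mmonic ?monicXn // (monicP p0_monic) oner_eq0.
by rewrite grs_wordE ?size_p // lt_i // hornerM p0_root ?lt_i // mul0r mulr0.
Qed.

Lemma grs_dual_wt_gt (x : 'rV[F]_q.+1) :
  x *m grs_gen^T = 0 -> (#|[set i | x ord0 i != 0%R]| <= m)%N -> x = 0.
Proof.
move=> x_dual wt_x; apply/rowP => i0; rewrite [RHS]mxE; apply/eqP; apply: contraT => x_i0.
have i0S : i0 \in [set i | x ord0 i != 0] by rewrite inE.
have [p le_p_m [c_i0 c_S]] := exists_grs_word_sep i0S wt_x.
have : (x *m (grs_word p)^T) ord0 ord0 = 0 by rewrite trmx_mul mulmxA x_dual mul0mx mxE.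
rewrite mxE (bigD1 i0) //= big1 ?addr0 => [|i i_i0].
  by move/eqP; rewrite mxE mulf_eq0 (negbTE x_i0) (negbTE c_i0).
rewrite mxE; have [-> | x_i] := eqVneq (x ord0 i) 0; first by rewrite mul0r.
by rewrite c_S ?mulr0 // !inE i_i0.
Qed.

End ExtendedGRS.

(* The additive character omega^tr(x) through which the phase errors Z(b) act. *)
Definition trace_char (F : finFieldType) (x : F) : algC := qomega F ^+ ftrace_nat x.

Section TraceChar2.
Variables (F : finFieldType) (k : nat).
Hypotheses (k_gt0 : (0 < k)%N) (cardF : #|F| = (2 ^ k)%N).

Lemma pchar2F : (2 \in [pchar F])%N.
Proof. exact: card_finPcharP cardF _. Qed.

Lemma addrrF (x : F) : x + x = 0.
Proof. by rewrite -mulr2n -mulr_natr (pcharf0 pchar2F) mulr0. Qed.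

Lemma exprDn_pow2 (x y : F) i : (x + y) ^+ (2 ^ i) = x ^+ (2 ^ i) + y ^+ (2 ^ i).
Proof. by rewrite exprDn_pchar // pnatX (pnatE _ (isT : prime 2)) pchar2F. Qed.

Lemma qcharE : qchar F = 2%N.
Proof. by rewrite /qchar cardF -(prednK k_gt0) pdiv_pfactor. Qed.

Lemma ftraceE (x : F) : ftrace x = \sum_(i < k) x ^+ (2 ^ i).
Proof. by rewrite /ftrace /qdeg qcharE cardF pfactorK. Qed.

Lemma ftraceD (x y : F) : ftrace (x + y) = ftrace x + ftrace y.
Proof. by rewrite !ftraceE -big_split; apply: eq_bigr => i _; rewrite exprDn_pow2. Qed.

Lemma ftrace0 : ftrace (0 : F) = 0.
Proof. by rewrite ftraceE big1 // => i _; rewrite expr0n expn_eq0. Qed.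

(* The squaring map permutes the summands x^(2^i) cyclically, as x^(2^k) = x. *)
Lemma ftrace_sqr (x : F) : ftrace (x ^+ 2) = ftrace x.
Proof.
rewrite !ftraceE -(prednK k_gt0) big_ord_recr [RHS]big_ord_recl /= addrC.
rewrite -exprM -expnS prednK // -cardF expf_card expn0 expr1; congr (_ + _).
by apply: eq_bigr => i _; rewrite -exprM -expnS.
Qed.

Lemma ftrace_sqr_add (x : F) : ftrace (x ^+ 2 + x) = 0.
Proof. by rewrite ftraceD ftrace_sqr addrrF. Qed.

Lemma ftrace01 (x : F) : ftrace x = 0 \/ ftrace x = 1.
Proof.
have idem : ftrace x ^+ 2 = ftrace x.
  rewrite -[in RHS]ftrace_sqr !ftraceE.
  rewrite (big_morph (fun t : F => t ^+ 2) (fun a b => exprDn_pow2 a b 1) (id1 := 0)) ?expr0n //.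
  by apply: eq_bigr => i _; rewrite -!exprM mulnC.
have : ftrace x * (ftrace x - 1) == 0 by rewrite mulrBr mulr1 -expr2 idem subrr.
by rewrite mulf_eq0 subr_eq0 => /orP[] /eqP; [left | right].
Qed.

Lemma ftrace_surj : exists c : F, ftrace c = 1.
Proof.
have [/existsP[c /eqP c1] | ] := boolP [exists c : F, ftrace c == 1]; first by exists c.
rewrite negb_exists => /forallP trace_neq1; exfalso.
(* Otherwise every element is a root of P, whose degree 2^(k-1) is below q. *)
pose P : {poly F} := \sum_(i < k) 'X^(2 ^ i).
have lt_k1_k : (k.-1 < k)%N by rewrite ltn_predL.
have P_nz : P != 0.
  apply/eqP => /(congr1 (coefp (2 ^ k.-1))); rewrite /= coef0 coef_sum.
  rewrite (bigD1 (Ordinal lt_k1_k)) //= coefXn eqxx big1 ?addr0; first exact/eqP/oner_neq0.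
  move=> i ik; rewrite coefXn eqn_exp2l //; case: eqP => // e.
  by case/eqP: ik; apply: val_inj.
have P_roots : all (root P) (enum F).
  apply/allP => x _; rewrite rootE /P horner_sum.
  under eq_bigr do rewrite hornerXn.
  by rewrite -ftraceE; case: (ftrace01 x) => // x1; have := trace_neq1 x; rewrite x1 eqxx.
have := max_poly_roots P_nz P_roots (enum_uniq F); rewrite -cardE cardF.
apply/negP; rewrite -leqNgt; apply: leq_trans (size_sum _ _ _) _.
by apply/bigmax_leqP => i _; rewrite size_polyXn ltn_exp2l.
Qed.

Lemma ftrace_subfield s (y : F) : k = (2 * s)%N -> y ^+ (2 ^ s) = y -> ftrace y = 0.
Proof.
move=> k2s ys; rewrite ftraceE k2s mul2n -addnn big_split_ord /=.
rewrite [X in _ + X](eq_bigr (fun i : 'I_s => y ^+ (2 ^ i))) ?addrrF // => i _.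
by rewrite expnD exprM ys.
Qed.

Lemma qomega_char2 : qomega F = -1.
Proof. by rewrite /qomega qcharE rootCK. Qed.

Lemma ftrace_natE (x : F) : ftrace_nat x = (ftrace x == 1).
Proof.
have q2 : (1 < qchar F)%N by rewrite qcharE.
rewrite /ftrace_nat; case: pickP => [j /eqP -> | no_pick] /=.
  have : (j < 2)%N by rewrite -qcharE.
  by case: j => [[|[|j]]] //= _ _; rewrite ?eqxx // eq_sym oner_eq0.
case: (ftrace01 x) => x01;
  [have := no_pick (Ordinal (ltnW q2)) | have := no_pick (Ordinal q2)];
  by rewrite /= x01 eqxx.
Qed.

Lemma trace_charE (x : F) : trace_char x = if ftrace x == 1 then -1 else 1.
Proof. by rewrite /trace_char ftrace_natE qomega_char2; case: eqP. Qed.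

Lemma trace_charD (x y : F) : trace_char (x + y) = trace_char x * trace_char y.
Proof.
rewrite !trace_charE ftraceD.
have o1 : ((0 : F) == 1) = false by rewrite eq_sym oner_eq0.
by case: (ftrace01 x) => ->; case: (ftrace01 y) => ->;
  rewrite ?addr0 ?add0r ?addrrF ?eqxx ?o1 ?mulrNN ?mul1r ?mulr1.
Qed.

Lemma trace_char0 : trace_char (0 : F) = 1.
Proof. by rewrite trace_charE ftrace0 eq_sym oner_eq0. Qed.

Lemma trace_char_surjN1 : exists c : F, trace_char c = -1.
Proof. by have [c c1] := ftrace_surj; exists c; rewrite trace_charE c1 eqxx. Qed.

End TraceChar2.

Section CSSCode.
Variables (F : finFieldType) (n m : nat) (G : 'M[F]_(m, n)).
Hypotheses (G_selforth : G *m G^T = 0) (G_free : row_free G).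
Hypothesis dual_wt_gt : forall x : 'rV[F]_n,
  x *m G^T = 0 -> (#|[set i | x ord0 i != 0%R]| <= m)%N -> x = 0.
Local Notation chi := (@trace_char F).
Hypotheses (chiD : {morph chi : x y / x + y >-> x * y}) (chi0 : chi 0 = 1).
Hypothesis chi_surjN1 : exists c, chi c = -1.

Local Notation word := {ffun 'I_n -> F}.

Definition row_ffun (y : word) : 'rV[F]_n := \row_i y i.
Definition ffun_row (x : 'rV[F]_n) : word := [ffun i => x ord0 i].

Lemma ffun_rowK : cancel ffun_row row_ffun.
Proof. by move=> x; apply/rowP => i; rewrite !mxE ffunE. Qed.

Lemma row_ffunD (y z : word) : row_ffun (y + z) = row_ffun y + row_ffun z.
Proof. by apply/rowP => i; rewrite !mxE ffunE. Qed.

Lemma row_ffun_eq0 (y : word) : (row_ffun y == 0) = (y == 0).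
Proof.
apply/eqP/eqP => [y0 | ->]; last by apply/rowP => i; rewrite !mxE ffunE.
by apply/ffunP => i; move/rowP/(_ i): y0; rewrite !mxE ffunE.
Qed.

Lemma selforth_sub (x : 'rV_n) : (x <= G)%MS -> x *m G^T = 0.
Proof. by case/submxP => D ->; rewrite -mulmxA G_selforth mulmx0. Qed.

Lemma addmx_subl (x y : 'rV_n) : (y <= G)%MS -> ((x + y)%R <= G)%MS = (x <= G)%MS.
Proof.
move=> yG; apply/idP/idP => [xyG | xG]; last exact: addmx_sub.
by rewrite -[x](addrK y) addmx_sub // (eqmx_opp y).
Qed.

(* C is the row space of G and C^perp = kermx G^T contains it; the quantum code
   is spanned by the uniform superpositions over the cosets w + C, with w ranging
   over a complement coset_reps of C in C^perp. *)
Definition dual_code := kermx G^T.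
Definition coset_reps := (dual_code :\: G)%MS.

Lemma rank_coset_reps : \rank coset_reps = (n - 2 * m)%N.
Proof.
have := mxrank_cap_compl dual_code G.
rewrite (capmx_idPr _); last by rewrite sub_kermx G_selforth.
by rewrite /coset_reps /dual_code mxrank_ker mxrank_tr (eqP G_free); lia.
Qed.

Lemma coset_reps_selforth (w : 'rV_n) : (w <= coset_reps)%MS -> w *m G^T = 0.
Proof. by move=> wW; apply/eqP; rewrite -sub_kermx (submx_trans wW) ?diffmxSl. Qed.

Definition coset_state (w : 'rV[F]_n) : qstate F n :=
  [ffun y => ((row_ffun y - w)%R <= G)%MS%:R].

Definition coset_states := [seq coset_state w | w <- enum (rowg coset_reps)].
Definition css_code : {vspace qstate F n} := span coset_states.

Lemma coset_state_supp (w : 'rV_n) y :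
  (w <= coset_reps)%MS -> coset_state w y != 0 -> row_ffun y *m G^T = 0.
Proof.
move=> wW; rewrite ffunE.
have [yw_G _ | ] := boolP ((row_ffun y - w)%R <= G)%MS; last by rewrite eqxx.
by have := selforth_sub yw_G; rewrite mulmxBl (coset_reps_selforth wW) subr0.
Qed.

Lemma coset_state_shift w y z :
  (row_ffun z <= G)%MS -> coset_state w (y + z) = coset_state w y.
Proof. by move=> zG; rewrite !ffunE row_ffunD addrAC addmx_subl. Qed.

Lemma coset_state_ffun_row (w1 w2 : 'rV_n) :
  (w1 <= coset_reps)%MS -> (w2 <= coset_reps)%MS ->
  coset_state w1 (ffun_row w2) = (w1 == w2)%:R.
Proof.
move=> w1W w2W; rewrite ffunE ffun_rowK.
have [-> | w12] := eqVneq w1 w2; first by rewrite subrr sub0mx.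
suff -> : ((w2 - w1)%R <= G)%MS = false by [].
apply/negP => w21G; have : ((w2 - w1)%R <= coset_reps :&: G)%MS.
  by rewrite sub_capmx w21G andbT addmx_sub // (eqmx_opp w1).
by rewrite capmx_diff submx0 subr_eq0 eq_sym (negbTE w12).
Qed.

Lemma free_coset_states : free coset_states.
Proof.
rewrite -[coset_states]in_tupleE; apply/freeP => k sum0 i.
set e := enum (rowg coset_reps).
have eW j : (j < size e)%N -> (e`_j <= coset_reps)%MS.
  by move=> lt_j; rewrite -mem_rowg -mem_enum mem_nth.
have lt_e (j : 'I_(size coset_states)) : (j < size e)%N.
  by rewrite -(size_map coset_state) ltn_ord.
have := congr1 (fun f : qstate F n => f (ffun_row e`_i)) sum0.
rewrite sum_ffunE ffunE /= (bigD1 i) //= big1 ?addr0 => [|j ji].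
  by rewrite ffunE (nth_map 0) // coset_state_ffun_row ?eW // eqxx -[_ *: _]/(_ * _) mulr1.
rewrite ffunE (nth_map 0) // coset_state_ffun_row ?eW // nth_uniq ?enum_uniq //.
by rewrite (negbTE (ji : (j : nat) != i)) -[_ *: _]/(_ * _) mulr0.
Qed.

Lemma dim_css_code : \dim css_code = (#|F| ^ (n - 2 * m))%N.
Proof.
by rewrite (eqP free_coset_states) size_map -cardE card_rowg rank_coset_reps.
Qed.

Lemma coset_states_nth (i : 'I_(size coset_states)) :
  exists2 w, (w <= coset_reps)%MS & coset_states`_i = coset_state w.
Proof.
have lt_i : (i < size (enum (rowg coset_reps)))%N by rewrite -(size_map coset_state).
by exists (enum (rowg coset_reps))`_i; rewrite ?(nth_map 0) // -mem_rowg -mem_enum mem_nth.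
Qed.

Lemma css_code_supp u y : u \in css_code -> row_ffun y *m G^T != 0 -> u y = 0.
Proof.
move=> uQ yC; rewrite (coord_span (uQ : u \in span (in_tuple _))) sum_ffunE big1 // => i _.
have [w wW ->] := coset_states_nth i; rewrite ffunE.
have [-> | /(coset_state_supp wW) yC0] := eqVneq (coset_state w y) 0; first exact: scaler0.
by rewrite yC0 eqxx in yC.
Qed.

Lemma css_code_shift u y z :
  u \in css_code -> (row_ffun z <= G)%MS -> u (y + z) = u y.
Proof.
move=> uQ zG; rewrite (coord_span (uQ : u \in span (in_tuple _))) !sum_ffunE.
apply: eq_bigr => i _; have [w wW ->] := coset_states_nth i.
by rewrite ffunE [RHS]ffunE coset_state_shift.
Qed.

Lemma dual_wt_gt_ffun (a : word) :
  (#|[set i | a i != 0%R]| <= m)%N -> row_ffun a *m G^T = 0 -> a = 0.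
Proof.
move=> wt_a aC; apply/eqP; rewrite -row_ffun_eq0; apply/eqP/dual_wt_gt => //.
by apply: leq_trans wt_a; apply: subset_leq_card; apply/subsetP => i; rewrite !inE mxE.
Qed.

Lemma exists_codeword_dot (b : word) t : row_ffun b *m G^T != 0 ->
  exists2 z : word, (row_ffun z <= G)%MS & \sum_i b i * z i = t.
Proof.
case/rV0Pn => j; set s := (row_ffun b *m G^T) 0 j => s_nz.
have sE : s = \sum_i b i * G j i by rewrite /s mxE; apply: eq_bigr => i _; rewrite !mxE.
exists (ffun_row ((t / s) *: row j G)); first by rewrite ffun_rowK scalemx_sub ?row_sub.
transitivity (t / s * s); last exact: divfK.
by rewrite sE mulr_sumr; apply: eq_bigr => i _; rewrite ffunE !mxE mulrCA.
Qed.

Lemma qinner_qerr_shift u v c (a b : word) : u \in css_code -> v \in css_code ->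
  row_ffun a *m G^T != 0 -> qinner u (qerr c a b v) = 0.
Proof.
move=> uQ vQ aC; apply: big1 => y _; rewrite ffunE.
have [yC | yC] := eqVneq (row_ffun y *m G^T) 0.
  2: by rewrite (css_code_supp uQ yC) conjC0 mul0r.
rewrite (css_code_supp (y := [ffun i => y i - a i]) vQ) ?mulr0 //.
apply: contra aC => /eqP yaC; apply/eqP.
have -> : row_ffun a = row_ffun y - row_ffun [ffun i => y i - a i].
  by apply/rowP => i; rewrite !mxE ffunE opprB addrC subrK.
by rewrite mulmxBl yC yaC subrr.
Qed.

Lemma qerr_phaseE c (b : word) (v : qstate F n) :
  qerr c 0 b v = [ffun y : word => qomega F ^+ c * chi (\sum_i b i * y i) * v y].
Proof.
apply/ffunP => y; rewrite !ffunE (big_morph chi chiD chi0).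
have -> : [ffun i => y i - (0 : word) i] = y by apply/ffunP => i; rewrite !ffunE subr0.
by congr (_ * _ * _); apply: eq_bigr => i _; rewrite ffunE subr0.
Qed.

(* Translating by a codeword z with b.z = c0, chi(c0) = -1, negates the sum. *)
Lemma qinner_qerr_phase u v c (b : word) : u \in css_code -> v \in css_code ->
  row_ffun b *m G^T != 0 -> qinner u (qerr c 0 b v) = 0.
Proof.
move=> uQ vQ bC; have [c0 chi_c0] := chi_surjN1.
have [z zG bz] := exists_codeword_dot c0 bC.
rewrite /qinner qerr_phaseE; set S := \sum_y _.
have : S = - S.
  rewrite {1}/S (reindex_inj (addIr z)) -sumrN; apply: eq_bigr => y _ /=.
  rewrite !ffunE (css_code_shift _ uQ zG) (css_code_shift _ vQ zG).
  have -> : \sum_i b i * (y + z) i = \sum_i b i * y i + c0.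
    by rewrite -bz -big_split; apply: eq_bigr => i _; rewrite ffunE mulrDr.
  by rewrite chiD chi_c0 mulrN1 mulrN mulNr mulrN.
by move/eqP; rewrite -addr_eq0 -mulr2n mulrn_eq0 => /eqP.
Qed.

Lemma css_code_min_dist : qmin_dist css_code m.+1.
Proof.
move=> u v uQ vQ uv c a b /= wt_ab.
have wt_a : (#|[set i | a i != 0%R]| <= m)%N.
  by apply: leq_trans wt_ab; apply: subset_leq_card; apply/subsetP => i; rewrite !inE => ->.
have wt_b : (#|[set i | b i != 0%R]| <= m)%N.
  by apply: leq_trans wt_ab; apply: subset_leq_card; apply/subsetP => i; rewrite !inE orbC => ->.
have [a0 | aC] := eqVneq (row_ffun a *m G^T) 0; last exact: qinner_qerr_shift.
rewrite (dual_wt_gt_ffun wt_a a0).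
have [b0 | bC] := eqVneq (row_ffun b *m G^T) 0; last exact: qinner_qerr_phase.
rewrite (dual_wt_gt_ffun wt_b b0) qerr_phaseE -(mulr0 (qomega F ^+ c)) -uv /qinner mulr_sumr.
apply: eq_bigr => y _; rewrite ffunE big1 => [|i _]; last by rewrite ffunE mul0r.
by rewrite chi0 mulr1 mulrCA.
Qed.

Lemma css_code_qcode : is_qcode css_code (n - 2 * m) m.+1.
Proof. by split; [exact: dim_css_code | exact: css_code_min_dist]. Qed.

End CSSCode.

Lemma sqrt_char2 (F : finFieldType) k (x : F) :
  (0 < k)%N -> #|F| = (2 ^ k)%N -> (x ^+ (2 ^ k.-1)) ^+ 2 = x.
Proof. by move=> k_gt0 cardF; rewrite -exprM -expnSr prednK // -cardF expf_card. Qed.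

(* For tr(c) = 1 neither factor has a root: a^(l+1) is fixed by a |-> a^l, so it
   lies in the subfield of order l and has trace 0, and so does a^2 + a. *)
Lemma rootfree_monic_poly (F : finFieldType) s e :
  (0 < s)%N -> #|F| = (2 ^ (2 * s))%N ->
  exists R : {poly F}, [/\ R \is monic, size R = (2 ^ s + 2 + 2 * e)%N
                         & forall a, R.[a] != 0].
Proof.
move=> s_gt0 cardF; have k_gt0 : (0 < 2 * s)%N by rewrite muln_gt0.
have [c trc] := ftrace_surj k_gt0 cardF.
pose l := (2 ^ s)%N; pose lin : {poly F} := 'X^(l.+1) + c%:P.
pose quad : {poly F} := 'X^2 + ('X + c%:P).
have lin_monic : lin \is monic by apply: monicXnaddC.
have quad_monic : quad \is monic.
  by rewrite monicE lead_coefDl ?lead_coefXn // size_polyXn size_XaddC.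
have size_quad_exp : size (quad ^+ e) = (2 * e).+1.
  have size_quad : size quad = 3%N by rewrite size_polyDl size_polyXn // size_XaddC.
  have := size_exp quad e; rewrite size_quad /= mul2n -muln2 => <-.
  by rewrite prednK // size_poly_gt0 monic_neq0 // monic_exp.
exists (lin * quad ^+ e); split.
- by rewrite monicMl // monic_exp.
- by rewrite size_monicM ?monic_neq0 ?monic_exp // size_quad_exp size_XnaddC; lia.
move=> a; rewrite hornerM horner_exp mulf_eq0 expf_eq0 negb_or negb_and !hornerE.
have c_eq x : (x + c == 0) = (c == x) by rewrite addr_eq0 (oppr_pchar2 (pchar2F cardF)) eq_sym.
apply/andP; split; last (apply/orP; right); rewrite c_eq; apply/eqP => c_def;
  move: trc; rewrite c_def => /eqP; apply/negP.
  rewrite (@ftrace_subfield _ _ k_gt0 cardF s) ?(eq_sym 0) ?oner_eq0 // -exprM -/l mulSn exprD.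
  by rewrite /l -expnD addnn -mul2n -cardF expf_card exprSr.
by rewrite (ftrace_sqr_add k_gt0 cardF) eq_sym oner_eq0.
Qed.

Local Close Scope ring_scope.

Theorem mainTheorem5 (s l : nat) (F : finFieldType) :
  l = (2 ^ s)%N -> (2 < l)%N -> #|F| = (l ^ 2)%N ->
  exists Q : {vspace qstate F (l ^ 2 + 1)},
    is_qMDS Q (l ^ 2 + 3 - 2 * l) l.
Proof.
move=> l_def l_gt2 card_F.
have s_gt0 : 0 < s by case: s l_def => [|s'] l1 //; rewrite l1 in l_gt2.
have k_gt0 : 0 < 2 * s by rewrite muln_gt0.
have card2 : #|F| = 2 ^ (2 * s) by rewrite card_F l_def -expnM mulnC.
have l_even : l = (l./2).*2 by rewrite l_def -(prednK s_gt0) expnS mul2n doubleK.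
have [R [R_monic size_R R_nz]] := rootfree_monic_poly (l.-1 * (l./2).-1) s_gt0 card2.
have size_R' : size R + 2 * l.-1 = l ^ 2 + 2 by rewrite size_R -l_def; nia.
pose w (a : F) := (R.[a] ^+ (2 ^ (2 * s).-1))%R.
have w_sqr a : (w a ^+ 2 = R.[a])%R by apply: sqrt_char2.
have [l_gt0 m_gt0] : 0 < l /\ 0 < l.-1 by split; lia.
have le_m_q : l.-1 <= l ^ 2 by rewrite (leq_trans (leq_pred l)) // -mulnn leq_pmull.
have := css_code_qcode (grs_gen_selforth card_F m_gt0 le_m_q R_monic size_R' w_sqr)
  (grs_gen_free card_F m_gt0 le_m_q w_sqr R_nz)
  (grs_dual_wt_gt card_F m_gt0 le_m_q R_monic size_R' w_sqr R_nz)
  (trace_charD k_gt0 card2) (trace_char0 k_gt0 card2) (trace_char_surjN1 k_gt0 card2).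
rewrite (prednK l_gt0) addn1 (_ : (l ^ 2).+1 - 2 * l.-1 = l ^ 2 + 3 - 2 * l); last by lia.
by move=> qcode; eexists; split; first exact: qcode; nia.
Qed.
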